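(* Let $0\le\alpha\le 1$ and $\beta>0$. Then $D_{\alpha,\beta}$ is a metric on the collection of all finite subsets of $\mathbb N$ if and only if $0\le\alpha\le \tfrac12$ and $\beta\ge \dfrac{1}{1-\alpha}$.
   Context: For finite sets $X,Y$ let $m(X,Y)=\min\{|X\setminus Y|,|Y\setminus X|\}$ and $M(X,Y)=\max\{|X\setminus Y|,|Y\setminus X|\}$. For $0\le\alpha\le1$ and $\beta>0$ the Tversky semimetric is $$D_{\alpha,\beta}(X,Y)=\begin{cases}\beta\,\dfrac{\alpha m(X,Y)+(1-\alpha)M(X,Y)}{|X\cap Y|+\beta\big(\alpha m(X,Y)+(1-\alpha)M(X,Y)\big)} & \text{if } X\cup Y\neq\emptyset,\\[2mm] 0 & \text{if } X=Y=\emptyset.\end{cases}$$ A metric is a function $d$ with $d(x,y)\ge0$, $d(x,y)=0$ iff $x=y$, $d(x,y)=d(y,x)$, and $d(x,y)\le d(x,z)+d(z,y)$. *)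

From HB Require Import structures.
From mathcomp Require Import all_boot all_order all_algebra finmap.
From mathcomp Require Import reals.
Set Implicit Arguments. Unset Strict Implicit. Unset Printing Implicit Defensive.
Import Order.TTheory GRing.Theory Num.Theory.
Local Open Scope fset_scope.
Local Open Scope ring_scope.

Definition msd (X Y : {fset nat}) : nat := minn #|` X `\` Y| #|` Y `\` X|.
Definition Msd (X Y : {fset nat}) : nat := maxn #|` X `\` Y| #|` Y `\` X|.

Definition tversky (R : realType) (alpha beta : R) (X Y : {fset nat}) : R :=
  if X `|` Y == fset0 then 0
  else
    let t := alpha * (msd X Y)%:R + (1 - alpha) * (Msd X Y)%:R in
    beta * t / ((#|` X `&` Y|)%:R + beta * t).

Definition is_metric (R : realType) (T : Type) (d : T -> T -> R) : Prop :=
  [/\ (forall x y, 0 <= d x y),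
      (forall x y, d x y = 0 <-> x = y),
      (forall x y, d x y = d y x) &
      (forall x y z, d x y <= d x z + d z y)].

(* Write D(X,Y) = f(beta t, |X & Y|) with f(x, c) = x / (c + x), increasing in x and decreasing
   in c, and t = alpha min(a,b) + (1 - alpha) max(a,b) for the two one-sided differences a, b.
   Sufficiency: for alpha <= 1/2, t = alpha (a + b) + (1 - 2 alpha) max(a,b) is subadditive and
   monotone, and f(A + B, e) = f(A, B + e) + f(B, A + e) splits D(X,Y) along the Venn diagram of
   X, Y, Z; the condition beta (1 - alpha) >= 1 makes the elements of Z that are counted in
   |X & Z| but not in |X & Y| cheaper than the part of beta t they replace.
   Necessity: with |S| = n and 0, 1 outside S, the triangle {0}+S, {0,1}+S, {1}+S forces
   n (2 alpha - 1) <= beta (1 - alpha) - 1 for every n; n = 0 gives beta (1 - alpha) >= 1 and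
   n -> oo gives alpha <= 1/2. *)
From HB Require Import structures.
From mathcomp Require Import all_boot all_order all_algebra finmap.
From mathcomp Require Import reals.
From mathcomp Require Import ring lra.
Import Order.TTheory GRing.Theory Num.Theory.
Set Implicit Arguments. Unset Strict Implicit. Unset Printing Implicit Defensive.
Local Open Scope fset_scope.
Local Open Scope ring_scope.

Section Saturation.
Variable R : realFieldType.
Implicit Types x y c : R.

Definition satur x c := x / (c + x).

Lemma satur_ge0 x c : 0 <= x -> 0 <= c -> 0 <= satur x c.
Proof. by move=> x0 c0; rewrite divr_ge0 // addr_ge0. Qed.

Lemma satur_eq0 x c : 0 <= x -> 0 <= c -> (satur x c == 0) = (x == 0).
Proof.
move=> x0 c0; rewrite /satur mulf_eq0 invr_eq0 paddr_eq0 //.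
by case: (x == 0); rewrite ?andbF ?orbF.
Qed.

Lemma ler_satur x x' c c' :
  0 <= x -> x <= x' -> 0 <= c' -> c' <= c -> satur x c <= satur x' c'.
Proof.
move=> x0 le_xx' c'0 le_c'c.
have [->|xn0] := eqVneq x 0; first by rewrite /satur mul0r satur_ge0 //; lra.
have x_gt0 : 0 < x by rewrite lt_def xn0.
rewrite /satur ler_pdivrMr; last by lra.
rewrite mulrAC ler_pdivlMr; last by lra.
nra.
Qed.

Lemma saturD x y c : satur (x + y) c = satur x (y + c) + satur y (x + c).
Proof.
rewrite /satur; have -> : y + c + x = c + (x + y) by ring.
have -> : x + c + y = c + (x + y) by ring.
by rewrite -mulrDl.
Qed.

End Saturation.

Section TverskyWeight.
Variable R : realFieldType.
Implicit Types (al : R) (a b : nat).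

Definition tweight al a b : R := al * (minn a b)%:R + (1 - al) * (maxn a b)%:R.

Lemma tweightC al a b : tweight al a b = tweight al b a.
Proof. by rewrite /tweight minnC maxnC. Qed.

Lemma tweightE al a b : tweight al a b = al * (a + b)%:R + (1 - 2 * al) * (maxn a b)%:R.
Proof. by rewrite /tweight -(addn_min_max a b) natrD; ring. Qed.

Lemma tweight_ge_max al a b : 0 <= al -> (1 - al) * (maxn a b)%:R <= tweight al a b.
Proof. by move=> al0; rewrite /tweight lerDr mulr_ge0. Qed.

Lemma tweight_ge0 al a b : 0 <= al <= 1 -> 0 <= tweight al a b.
Proof. by case/andP=> al0 al1; rewrite /tweight addr_ge0 ?mulr_ge0 // subr_ge0. Qed.

Lemma tweight_mono al a b a' b' : 0 <= al <= 1 ->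
  (a <= a')%N -> (b <= b')%N -> tweight al a b <= tweight al a' b'.
Proof.
case/andP=> al0 al1 le_aa' le_bb'; rewrite /tweight lerD // ler_wpM2l ?subr_ge0 //.
  by rewrite ler_nat leq_min !geq_min le_aa' le_bb' orbT.
by rewrite ler_nat geq_max !leq_max le_aa' le_bb' orbT.
Qed.

Lemma tweight_subadd al a1 a2 b1 b2 : al <= 2^-1 ->
  tweight al (a1 + a2) (b1 + b2) <= tweight al a1 b1 + tweight al a2 b2.
Proof.
move=> al_half; rewrite !tweightE.
have max_subadd : (maxn (a1 + a2) (b1 + b2))%:R <= (maxn a1 b1)%:R + (maxn a2 b2)%:R :> R.
  by rewrite -natrD ler_nat geq_max !leq_add ?leq_maxl ?leq_maxr.
have := ler_wpM2l (_ : 0 <= 1 - 2 * al) max_subadd; rewrite !natrD; lra.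
Qed.

End TverskyWeight.

Lemma tversky_satur (R : realType) (al be : R) X Y :
  tversky al be X Y = satur (be * tweight al #|` X `\` Y| #|` Y `\` X|) #|` X `&` Y|%:R.
Proof.
rewrite /tversky /tweight /msd /Msd; case: ifP => //.
rewrite fsetU_eq0 => /andP[/eqP-> /eqP->].
by rewrite fsetDv cardfs0 !mulr0 addr0 mulr0 /satur mul0r.
Qed.

Lemma tversky_sym (R : realType) (al be : R) X Y : tversky al be X Y = tversky al be Y X.
Proof. by rewrite /tversky /msd /Msd fsetUC fsetIC minnC maxnC. Qed.

Section Sufficiency.
Variables (R : realType) (al be : R).
Hypotheses (al_ge0 : 0 <= al) (al_le_half : al <= 2^-1) (be_large : 1 <= be * (1 - al)).

Let al_lt1 : 0 < 1 - al. Proof. by move: al_le_half; lra. Qed.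
Let al_range : 0 <= al <= 1. Proof. by rewrite al_ge0 -subr_ge0 ltW. Qed.
Let be_gt0 : 0 < be. Proof. by rewrite -(pmulr_lgt0 _ al_lt1); move: be_large; lra. Qed.

Lemma le_scaled_tweightl a b : a%:R <= be * tweight al a b.
Proof.
have := tweight_ge_max a b al_ge0.
have : a%:R <= (maxn a b)%:R :> R by rewrite ler_nat leq_maxl.
have : 0 <= a%:R :> R by [].
move: be_large be_gt0 al_lt1; nra.
Qed.

Lemma le_scaled_tweightr a b : b%:R <= be * tweight al a b.
Proof. by rewrite tweightC le_scaled_tweightl. Qed.

(* The counts are those of the Venn diagram of X, Y, Z: p = |X\Y\Z|, v = |(X\Y)&Z|,
   w = |(Y\X)&Z|, q = |Y\X\Z| and e = |X&Y&Z|; the primed numbers are the differences they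
   are contained in, and c = |X&Y|. *)
Lemma satur_tweight_triangle (p v w q e c p' w' v' q' : nat) :
    (p <= p')%N -> (w <= w')%N -> (v <= v')%N -> (q <= q')%N -> (e <= c)%N ->
  satur (be * tweight al (v + p) (q + w)) c%:R <=
  satur (be * tweight al p' w') (e + v)%:R + satur (be * tweight al v' q') (e + w)%:R.
Proof.
move=> le_pp' le_ww' le_vv' le_qq' le_ec.
set A := be * tweight al p w; set B := be * tweight al v q.
have A_ge0 : 0 <= A by rewrite mulr_ge0 ?tweight_ge0 // ltW.
have B_ge0 : 0 <= B by rewrite mulr_ge0 ?tweight_ge0 // ltW.
apply: (@le_trans _ _ (satur (A + B) e%:R)).
  apply: ler_satur; rewrite ?ler_nat ?mulr_ge0 ?tweight_ge0 ?(ltW be_gt0) //.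
  by rewrite -mulrDr ler_pM2l // addrC tweight_subadd.
rewrite saturD !natrD; apply: lerD; apply: ler_satur; rewrite ?addr_ge0 //.
- by rewrite ler_pM2l // tweight_mono.
- by rewrite [_ + v%:R]addrC lerD2r le_scaled_tweightl.
- by rewrite ler_pM2l // tweight_mono.
- by rewrite [_ + w%:R]addrC lerD2r le_scaled_tweightr.
Qed.

Lemma tversky_triangle X Y Z :
  tversky al be X Y <= tversky al be X Z + tversky al be Z Y.
Proof.
rewrite !tversky_satur.
have XYE : #|` X `\` Y| = (#|` (X `\` Y) `&` Z| + #|` (X `\` Y) `\` Z|)%N by rewrite cardfsID.
have YXE : #|` Y `\` X| = (#|` (Y `\` X) `\` Z| + #|` (Y `\` X) `&` Z|)%N
  by rewrite addnC cardfsID.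
have XZE : #|` X `&` Z| = (#|` X `&` Y `&` Z| + #|` (X `\` Y) `&` Z|)%N.
  rewrite -(cardfsID Y (X `&` Z)); congr (_ + _)%N; congr #|` _|; apply/fsetP => x; rewrite !inE;
  by case: (x \in X); case: (x \in Y); case: (x \in Z).
have ZYE : #|` Z `&` Y| = (#|` X `&` Y `&` Z| + #|` (Y `\` X) `&` Z|)%N.
  rewrite -(cardfsID X (Z `&` Y)); congr (_ + _)%N; congr #|` _|; apply/fsetP => x; rewrite !inE;
  by case: (x \in X); case: (x \in Y); case: (x \in Z).
rewrite XYE YXE XZE ZYE; apply: satur_tweight_triangle;
  rewrite ?(fsubset_leq_card (fsubsetIl _ _)) //; apply: fsubset_leq_card;
  apply/fsubsetP => x; rewrite !inE;
  by case: (x \in X); case: (x \in Y); case: (x \in Z).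
Qed.

Lemma tversky_ge0 X Y : 0 <= tversky al be X Y.
Proof. by rewrite tversky_satur satur_ge0 // mulr_ge0 ?tweight_ge0 // ltW. Qed.

Lemma tversky_eq0 X Y : tversky al be X Y = 0 <-> X = Y.
Proof.
split=> [|->]; last by rewrite tversky_satur fsetDv cardfs0 /tweight !mulr0 addr0 mulr0
  /satur mul0r.
rewrite tversky_satur => /eqP.
rewrite satur_eq0 ?mulr_ge0 ?tweight_ge0 ?(ltW be_gt0) // mulf_eq0 gt_eqF //= => /eqP t0.
have := tweight_ge_max #|` X `\` Y| #|` Y `\` X| al_ge0.
rewrite t0 pmulr_rle0 // lern0 -leqn0 geq_max !leqn0.
by rewrite !cardfs_eq0 !fsetD_eq0 => sub; apply/eqP; rewrite eqEfsubset.
Qed.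

Lemma tversky_is_metric : is_metric (tversky al be).
Proof.
split; [exact: tversky_ge0 | exact: tversky_eq0 | exact: tversky_sym |
        exact: tversky_triangle].
Qed.

End Sufficiency.

Lemma nonpos_of_bounded_multiples (R : archiRealFieldType) (x c : R) :
  (forall n : nat, n%:R * x <= c) -> x <= 0.
Proof.
move=> bounded; rewrite leNgt; apply/negP => x_gt0.
have c_ge0 : 0 <= c by have := bounded 0%N; rewrite mul0r.
have := archi_boundP (divr_ge0 c_ge0 (ltW x_gt0)).
by rewrite ltr_pdivrMr // ltNge bounded.
Qed.

Lemma satur_witness_bound (R : realFieldType) (al be : R) (n : nat) :
  0 < be -> 0 <= al -> al <= 1 ->
  satur be n%:R <= satur (be * (1 - al)) n.+1%:R + satur (be * (1 - al)) n.+1%:R ->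
  n%:R * (2 * al - 1) <= be * (1 - al) - 1.
Proof.
move=> be_gt0 al_ge0 al_le1; rewrite /satur -mulrDl -natr1.
have g_ge0 : 0 <= be * (1 - al) by rewrite mulr_ge0 ?subr_ge0 // ltW.
have n_ge0 : 0 <= n%:R :> R by [].
rewrite ler_pdivrMr; last by lra.
rewrite mulrAC ler_pdivlMr; last by lra.
move=> H; have : be * (n%:R * (2 * al - 1) - (be * (1 - al) - 1)) <= 0 by nra.
by rewrite pmulr_rle0 // subr_le0.
Qed.

Local Ltac fset_witness_ext S0 S1 :=
  apply/fsetP => x; rewrite !inE; have [->|_] := eqVneq x 0%N; rewrite ?(negbTE S0) //;
  have [->|_] := eqVneq x 1%N; rewrite ?(negbTE S1) //=; case: (_ \in _).

Lemma tversky_witness_triangle (R : realType) (al be : R) (S : {fset nat}) :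
    0 < be -> 0 <= al -> al <= 1 -> 0%N \notin S -> 1%N \notin S ->
  tversky al be (0%N |` S) (1%N |` S) <=
    tversky al be (0%N |` S) (0%N |` (1%N |` S)) + tversky al be (0%N |` (1%N |` S)) (1%N |` S) ->
  #|` S|%:R * (2 * al - 1) <= be * (1 - al) - 1.
Proof.
move=> be_gt0 al_ge0 al_le1 S0 S1.
have XYE : (0%N |` S) `\` (1%N |` S) = [fset 0%N] by fset_witness_ext S0 S1.
have YXE : (1%N |` S) `\` (0%N |` S) = [fset 1%N] by fset_witness_ext S0 S1.
have XIY : (0%N |` S) `&` (1%N |` S) = S by fset_witness_ext S0 S1.
have XZE : (0%N |` S) `\` (0%N |` (1%N |` S)) = fset0 by fset_witness_ext S0 S1.
have ZXE : (0%N |` (1%N |` S)) `\` (0%N |` S) = [fset 1%N] by fset_witness_ext S0 S1.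
have XIZ : (0%N |` S) `&` (0%N |` (1%N |` S)) = 0%N |` S by fset_witness_ext S0 S1.
have ZYE : (0%N |` (1%N |` S)) `\` (1%N |` S) = [fset 0%N] by fset_witness_ext S0 S1.
have YZE : (1%N |` S) `\` (0%N |` (1%N |` S)) = fset0 by fset_witness_ext S0 S1.
have ZIY : (0%N |` (1%N |` S)) `&` (1%N |` S) = 1%N |` S by fset_witness_ext S0 S1.
rewrite !tversky_satur XYE YXE XIY XZE ZXE XIZ ZYE YZE ZIY !cardfsU1 S0 S1 !cardfs1 cardfs0.
rewrite /tweight minnn maxnn min0n max0n minn0 maxn0 add1n mulr0 add0r !mulr1 [al + _]addrC subrK mulr1.
exact: satur_witness_bound.
Qed.

Lemma tversky_triangle_bound (R : realType) (al be : R) (n : nat) :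
    0 < be -> 0 <= al -> al <= 1 ->
    (forall X Y Z, tversky al be X Y <= tversky al be X Z + tversky al be Z Y) ->
  n%:R * (2 * al - 1) <= be * (1 - al) - 1.
Proof.
move=> be_gt0 al_ge0 al_le1 triangle; set S := [fset i in iota 2 n].
have cardS : #|` S| = n by rewrite card_fseq undup_id ?iota_uniq // size_iota.
by rewrite -cardS tversky_witness_triangle // !inE mem_iota.
Qed.

Theorem theorem3 (R : realType) (alpha beta : R) :
  0 <= alpha <= 1 -> 0 < beta ->
  (is_metric (tversky alpha beta) <->
   (alpha <= 2^-1 /\ 1 / (1 - alpha) <= beta)).
Proof.
move=> /andP[al_ge0 al_le1] be_gt0; split.
- case=> _ _ _ triangle.
  have {triangle} bound n := tversky_triangle_bound n be_gt0 al_ge0 al_le1 triangle.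
  have be_large : 1 <= beta * (1 - alpha) by have := bound 0%N; rewrite mul0r subr_ge0.
  have al_lt1 : 0 < 1 - alpha by rewrite -(pmulr_rgt0 _ be_gt0) (lt_le_trans ltr01 be_large).
  split; last by rewrite ler_pdivrMr // mulrC.
  by have := nonpos_of_bounded_multiples bound; lra.
- case=> al_le_half be_ge; apply: tversky_is_metric => //.
  have al_lt1 : 0 < 1 - alpha by lra.
  by move: be_ge; rewrite ler_pdivrMr // mulrC.
Qed.
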